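(* Let $G=(V,E)$ be a finite simple connected graph with $n$ vertices, $\omega\colon V\to(0,\infty)$ a weight function with $\omega=\omega(V)$, $\delta>0$, and $s=\frac{8\ln n}{\delta^2}$. Let $S=\{m_1,\dots,m_s\}$ be a random multiset of $s$ vertices drawn independently with $\Pr(m_i=v)=\omega(v)/\omega$. Then for any vertex $v$, with probability at least $1-n^{-3}$, \[\frac{\Lambda(v)}{\omega}\le\frac{\Lambda^{*}(v)}{s}+\frac{\delta}{2}.\]
   Context: For vertices $q,v$, a vertex $u$ is consistent with $(q,v)$ if $q=v=u$, or $q\ne v$ and $v$ lies on a shortest path between $u$ and $q$; $N(q,v)$ is the set of such $u$. $N(v)$ is the neighbor set of $v$. $\omega(X)=\sum_{u\in X}\omega(u)$. $\Lambda(v)=\max_{u\in N(v)}\omega(N(v,u))$ and $\Lambda^{*}(v)=\max_{u\in N(v)}|S\cap N(v,u)|$, where $S\cap X$ is the multiset $\{m_i: m_i\in X\}$ (counted with multiplicity). *)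

From HB Require Import structures.
From mathcomp Require Import all_boot all_order all_algebra.
From mathcomp Require Import boolp reals exp.
Set Implicit Arguments. Unset Strict Implicit. Unset Printing Implicit Defensive.
Import Order.TTheory GRing.Theory Num.Theory.
Local Open Scope ring_scope.

Definition simple_graph (T : finType) (e : rel T) : Prop :=
  symmetric e /\ irreflexive e.

Definition connected_graph (T : finType) (e : rel T) : Prop :=
  forall u v : T, connect e u v.

Definition is_shortest_path (T : finType) (e : rel T) (u q : T) (p : seq T) : Prop :=
  [/\ path e u p, last u p = q &
      forall p' : seq T, path e u p' -> last u p' = q -> (size p <= size p')%N].

Definition on_shortest_path (T : finType) (e : rel T) (u q v : T) : Prop :=
  exists p : seq T, is_shortest_path e u q p /\ v \in u :: p.

Definition consistent (T : finType) (e : rel T) (q v u : T) : Prop :=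
  (q = v /\ v = u) \/ (q <> v /\ on_shortest_path e u q v).

Definition inN (T : finType) (e : rel T) (q v u : T) : bool :=
  `[< consistent e q v u >].

Definition weightN (R : realType) (T : finType) (e : rel T) (w : T -> R) (q v : T) : R :=
  \sum_(u | inN e q v u) w u.

(* Lambda(v) = max_{u in N(v)} omega(N(v,u)) (0 if v has no neighbour) *)
Definition Lambda (R : realType) (T : finType) (e : rel T) (w : T -> R) (v : T) : R :=
  \big[Order.max/0]_(u | e v u) weightN e w v u.

(* |S cap N(v,u)| counted with multiplicity, for S = (m_0, ..., m_{s-1}) *)
Definition countN (T : finType) (e : rel T) (s : nat) (m : {ffun 'I_s -> T}) (q v : T) : nat :=
  #|[set i : 'I_s | inN e q v (m i)]|.

Definition LambdaStar (T : finType) (e : rel T) (s : nat) (m : {ffun 'I_s -> T}) (v : T) : nat :=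
  \max_(u | e v u) countN e m v u.

(* Probability that s independent draws m_i with Pr(m_i = x) = w x / W satisfy
   the predicate P: sum of product weights over all outcomes satisfying P. *)
Definition sample_prob (R : realType) (T : finType) (w : T -> R) (s : nat)
  (P : {ffun 'I_s -> T} -> Prop) : R :=
  let W := \sum_(x : T) w x in
  \sum_(m : {ffun 'I_s -> T} | `[< P m >]) \prod_(i < s) (w (m i) / W).

(* Only a neighbour u of v attaining Lambda(v) matters, and Lambda*(v) >= |S cap N(v,u)|,
   a sum of s independent Bernoulli variables of mean p = w(N(v,u)) / w.  A failure
   forces the empirical frequency of N(v,u) in S to be at most p - delta/2, which by
   Hoeffding's inequality has probability at most exp (- 2 s (delta/2)^2) = n^-4 <= n^-3.
   Hoeffding's lemma for a Bernoulli variable is obtained from the sign of a derivative. *)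

From mathcomp Require Import all_boot all_order all_algebra.
From mathcomp Require Import boolp reals topology normedtype derive sequences exp.
From mathcomp Require Import ring lra.

Set Implicit Arguments.
Unset Strict Implicit.
Unset Printing Implicit Defensive.
Import Order.TTheory GRing.Theory Num.Theory.
Import numFieldNormedType.Exports.
Local Open Scope ring_scope.

Section ExpInequalities.
Variable R : realType.

Lemma ger0_is_derive_le (f df : R -> R) (a b : R) : a <= b ->
  (forall x : R, is_derive x (1 : R) f (df x)) -> (forall x, a <= x <= b -> 0 <= df x) ->
  f a <= f b.
Proof.
move=> le_ab f_df df_ge0.
have [|c c_ab E] := MVT_segment le_ab (fun x _ => f_df x).
  apply/continuous_subspaceT => x.
  by apply/differentiable_continuous/derivable1_diffP; have [] := f_df x.
by rewrite -subr_ge0 E mulr_ge0 ?subr_ge0 // df_ge0 // -in_itv.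
Qed.

(* Equivalently, tanh (y / 2) <= y / 2. *)
Lemma expR_2Bx_le (y : R) : 0 <= y -> expR y * (2 - y) <= 2 + y.
Proof.
move=> y_ge0.
pose h (x : R) := 2 + x - expR x * (2 - x).
suff : h 0 <= h y by rewrite /h expR0; lra.
apply: (@ger0_is_derive_le h (fun x => 1 - expR x * (1 - x))) => // [x|x /andP[x_ge0 _]].
  by apply: is_derive_eq; rewrite /GRing.scale /=; ring.
have := expR_ge1Dx (- x); have := expRxMexpNx_1 x; have := expR_gt0 x.
nra.
Qed.

(* Cleared of denominators, this says that the derivative of
   [x |-> ln (1 - p + p e^-x) + p x] is at most [x / 4]. *)
Lemma hoeffding_slope_le (p x : R) : 0 <= p <= 1 -> 0 <= x ->
  p * (1 - p) * (1 - expR (- x)) <= (1 - p + p * expR (- x)) * (x / 4).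
Proof.
move=> /andP[p_ge0 p_le1] x_ge0.
set r := expR (- (x / 2)).
have r_sq : expR (- x) = r * r by rewrite -expRD; congr expR; lra.
have r_gt0 : 0 < r := expR_gt0 _.
have r_le1 : r <= 1 by rewrite expR_le1; lra.
have tanh_le : 1 - r <= x * (1 + r) / 4.
  have := ler_wpM2r (ltW r_gt0) (@expR_2Bx_le (x / 2) ltac:(lra)).
  by rewrite mulrAC expRxMexpNx_1 mul1r; lra.
have pq_ge0 : 0 <= p * (1 - p) by nra.
have r1_ge0 : 0 <= 1 + r by lra.
have := ler_wpM2l pq_ge0 (ler_wpM2r r1_ge0 tanh_le).
have := sqr_ge0 (1 - p * (1 + r)).
rewrite r_sq; nra.
Qed.

Lemma hoeffding_bernoulli (p l : R) : 0 <= p <= 1 -> 0 <= l ->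
  1 - p + p * expR (- l) <= expR (l ^+ 2 / 8 - l * p).
Proof.
move=> p01 l_ge0.
pose M (x : R) := 1 - p + p * expR (- x).
pose G (x : R) := - (M x * expR (x * p - x ^+ 2 / 8)).
have : G 0 <= G l.
  apply: (@ger0_is_derive_le G (fun x => expR (x * p - x ^+ 2 / 8) *
     (p * expR (- x) - M x * (p - x / 4)))) => // [x|x /andP[x_ge0 _]].
    by apply: is_derive_eq; rewrite /GRing.scale /=; field.
  rewrite mulr_ge0 ?expR_ge0 //.
  have := hoeffding_slope_le p01 x_ge0; rewrite /M; nra.
rewrite /G /M mul0r expr0n /= mul0r subrr oppr0 expR0 mulr1 lerN2 => M_le.
rewrite -(ler_pM2r (expR_gt0 (l * p - l ^+ 2 / 8))) -expRD.
have -> : l ^+ 2 / 8 - l * p + (l * p - l ^+ 2 / 8) = 0 by ring.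
by rewrite expR0; lra.
Qed.

End ExpInequalities.

Lemma sum_ffun_prod (R : comPzSemiRingType) (I T : finType) (f : T -> R) :
  \sum_(m : {ffun I -> T}) \prod_i f (m i) = (\sum_x f x) ^+ #|I|.
Proof. by rewrite -(bigA_distr_bigA (fun _ => f)) prodr_const. Qed.

Lemma ler_divnMl (R : realFieldType) (k s : nat) (a : R) : (k <= s)%N ->
  k%:R / s%:R <= a -> k%:R <= s%:R * a.
Proof.
case: s => [|s] k_le_s; last by rewrite ler_pdivrMr ?ltr0Sn // mulrC.
by move: k_le_s; rewrite leqn0 => /eqP -> _; rewrite mul0r.
Qed.

Section Sampling.
Variables (R : realType) (T : finType) (w : T -> R) (s : nat).
Hypothesis w_ge0 : forall x, 0 <= w x.
Let W := \sum_x w x.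
Hypothesis W_gt0 : 0 < W.

Lemma sample_weight_ge0 (m : {ffun 'I_s -> T}) : 0 <= \prod_i (w (m i) / W).
Proof. by apply: prodr_ge0 => i _; rewrite divr_ge0 // ltW. Qed.

Lemma sample_weight_sum : \sum_(m : {ffun 'I_s -> T}) \prod_i (w (m i) / W) = 1.
Proof.
by rewrite (@sum_ffun_prod _ _ _ (fun x => w x / W)) -mulr_suml divff ?gt_eqF // expr1n.
Qed.

Lemma sample_probC (P : {ffun 'I_s -> T} -> Prop) :
  sample_prob w P = 1 - sample_prob w (fun m => ~ P m).
Proof.
rewrite /sample_prob -/W -[X in X - _]sample_weight_sum.
rewrite [X in _ - X](eq_bigl (fun m => ~~ `[< P m >])) => [|m]; last exact: asbool_neg.
by rewrite (bigID (fun m => `[< P m >]) predT) /= addrK.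
Qed.

Lemma le_sample_prob (P Q : {ffun 'I_s -> T} -> Prop) :
  (forall m, P m -> Q m) -> sample_prob w P <= sample_prob w Q.
Proof.
move=> PQ; rewrite /sample_prob -/W [X in _ <= X](bigID (fun m => `[< P m >])) /=.
rewrite [X in _ <= X + _](eq_bigl (fun m => `[< P m >])) => [|m].
  by rewrite lerDl sumr_ge0 // => m _; apply: sample_weight_ge0.
by case: (asboolP (P m)) => [/PQ/asboolP ->|]; rewrite ?andbF.
Qed.

Lemma sample_prob0 (P : {ffun 'I_s -> T} -> Prop) :
  (forall m, ~ P m) -> sample_prob w P = 0.
Proof. by move=> nP; rewrite /sample_prob big_pred0 // => m; apply/asboolP/nP. Qed.

Let frac (A : pred T) := (\sum_(x | A x) w x) / W.

Lemma frac_itv (A : pred T) : 0 <= frac A <= 1.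
Proof.
rewrite divr_ge0 ?sumr_ge0 ?(ltW W_gt0) //= ler_pdivrMr // mul1r /W [leRHS](bigID A) /=.
by rewrite lerDl sumr_ge0.
Qed.

Lemma sum_tilted_weights (A : pred T) (l : R) :
  \sum_x w x / W * expR (- l) ^+ A x = 1 - frac A + frac A * expR (- l).
Proof.
rewrite (bigID A) /= (eq_bigr (fun x => w x / W * expR (- l))) => [|x ->//].
rewrite [X in _ + X](eq_bigr (fun x => w x / W)) => [|x /negbTE ->]; last by rewrite mulr1.
have W_split : W = \sum_(x | A x) w x + \sum_(x | ~~ A x) w x by rewrite /W (bigID A).
rewrite -!mulr_suml /frac W_split; field.
by rewrite -W_split lt0r_neq0.
Qed.

Lemma hoeffding_lower_tail (A : pred T) (t : R) : 0 <= t ->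
  sample_prob w (fun m : {ffun 'I_s -> T} =>
    #|[set i | A (m i)]|%:R / s%:R <= frac A - t)
  <= expR (- (2 * s%:R * t ^+ 2)).
Proof.
(* Exponential Markov inequality at [l = 4 t], the minimiser of [l ^+ 2 / 8 - l * t]. *)
move=> t_ge0; pose l := 4 * t; have l_ge0 : 0 <= l by rewrite /l; lra.
pose g x := w x / W * expR (- l) ^+ A x.
have g_ge0 x : 0 <= g x by rewrite mulr_ge0 ?exprn_ge0 ?expR_ge0 ?divr_ge0 ?(ltW W_gt0).
pose c := expR (l * (s%:R * (frac A - t))).
have markov (m : {ffun 'I_s -> T}) : #|[set i | A (m i)]|%:R / s%:R <= frac A - t ->
    \prod_i (w (m i) / W) <= c * \prod_i g (m i).
  have count_le_s : (#|[set i | A (m i)]| <= s)%N.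
    by rewrite -[s in (_ <= s)%N]card_ord max_card.
  move=> /(ler_divnMl count_le_s) count_le.
  rewrite /g [X in _ <= _ * X]big_split /= prodrXr.
  have -> : (\sum_i A (m i))%N = #|[set i | A (m i)]|.
    by rewrite -sum1dep_card [RHS]big_mkcond.
  rewrite mulrCA -expRM_natl -expRD -[X in X <= _]mulr1 ler_wpM2l ?sample_weight_ge0 //.
  by rewrite -[leLHS]expR0 ler_expR; nra.
apply: le_trans (_ : \sum_(m : {ffun 'I_s -> T}) c * \prod_i g (m i) <= _).
  rewrite /sample_prob -/W big_mkcond /=; apply: ler_sum => m _.
  case: asboolP => [/markov //|_].
  by rewrite mulr_ge0 ?expR_ge0 // prodr_ge0.
have frac01 := frac_itv A.
rewrite -big_distrr sum_ffun_prod card_ord sum_tilted_weights.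
apply: le_trans (ler_wpM2l (expR_ge0 _) (lerXn2r s _ _ (hoeffding_bernoulli frac01 l_ge0))) _.
- by rewrite nnegrE; case/andP: frac01 => ? ?; have := expR_ge0 (- l); nra.
- by rewrite nnegrE expR_ge0.
by rewrite -expRM_natl -expRD ler_expR /l; lra.
Qed.

End Sampling.

Lemma sample_size_tail_le (R : realType) (n s delta : R) : 1 <= n -> 0 < delta ->
  s = 8 * ln n / delta ^+ 2 -> expR (- (2 * s * (delta / 2) ^+ 2)) <= (n ^+ 3)^-1.
Proof.
move=> n_ge1 delta_gt0 ->.
have -> : (n ^+ 3)^-1 = expR (- (3%:R * ln n)) by rewrite expRN expRM_natl lnK // posrE; lra.
have -> : 2 * (8 * ln n / delta ^+ 2) * (delta / 2) ^+ 2 = 4 * ln n.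
  by field; rewrite gt_eqF.
by rewrite ler_expR lerN2; have := ln_ge0 n_ge1; lra.
Qed.

Lemma bigmax_idx_or_attained (d : Order.disp_t) (X : orderType d) (I : finType)
    (x0 : X) (P : pred I) (F : I -> X) :
  let M := \big[Order.max/x0]_(i | P i) F i in M = x0 \/ exists2 i, P i & M = F i.
Proof.
apply: (big_ind (fun y => y = x0 \/ exists2 i, P i & y = F i)) => [|x y x_ok y_ok|i Pi].
- by left.
- by rewrite /Order.max; case: ifP.
- by right; exists i.
Qed.

Theorem lemma12 (R : realType) (T : finType) (e : rel T) (w : T -> R)
  (delta : R) (s : nat) :
  simple_graph e -> connected_graph e ->
  (forall x, 0 < w x) ->
  0 < delta ->
  s%:R = 8 * ln (#|T|%:R) / delta ^+ 2 ->
  forall v : T,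
    sample_prob w (fun m : {ffun 'I_s -> T} =>
      Lambda e w v / (\sum_(x : T) w x)
        <= (LambdaStar e m v)%:R / s%:R + delta / 2)
    >= 1 - (#|T|%:R ^+ 3)^-1.
Proof.
move=> _ _ w_gt0 delta_gt0 s_def v.
have w_ge0 x : 0 <= w x := ltW (w_gt0 x).
have W_gt0 : 0 < \sum_x w x by rewrite (bigD1 v) //= ltr_wpDr ?sumr_ge0.
have n_ge1 : 1 <= #|T|%:R :> R by rewrite ler1n; apply/card_gt0P; exists v.
rewrite (sample_probC W_gt0) lerD2l lerN2.
rewrite /Lambda; have [-> | [u vu ->]] := bigmax_idx_or_attained 0 (e v) (weightN e w v).
  rewrite sample_prob0 ?invr_ge0 ?exprn_ge0 ?ler0n // => m; apply.
  by rewrite mul0r addr_ge0 ?divr_ge0 //; lra.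
have half_delta_ge0 : 0 <= delta / 2 by lra.
apply: le_trans (sample_size_tail_le n_ge1 delta_gt0 s_def).
apply: le_trans _ (hoeffding_lower_tail s w_ge0 W_gt0 (inN e v u) half_delta_ge0).
apply: le_sample_prob w_ge0 W_gt0 _ _ _ => m /negP; rewrite -ltNge => failed.
have count_le : (countN e m v u <= LambdaStar e m v)%N by apply: leq_bigmax_cond.
have : (countN e m v u)%:R / s%:R <= (LambdaStar e m v)%:R / s%:R :> R.
  by rewrite ler_wpM2r ?invr_ge0 ?ler_nat.
rewrite /countN /weightN in failed *; lra.
Qed.
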